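(* Let $E$ be a Banach lattice and let $T\colon E\to E$ be an order bounded, disjoint preserving operator which is $uaw$-Dunford-Pettis. Then the modulus $|T|$ of $T$ exists and is $uaw$-Dunford-Pettis.
   Context: A net $(x_\alpha)$ in a Banach lattice $E$ is $uaw$-convergent to $x$ if $|x_\alpha-x|\wedge u\to 0$ weakly for every $u\in E_+$. A bounded operator $T\colon E\to E$ is $uaw$-Dunford-Pettis if every norm bounded $uaw$-null sequence $(x_n)$ in $E$ satisfies $\|Tx_n\|\to 0$. An operator $T$ is disjoint preserving if $x\perp y$ implies $Tx\perp Ty$. *)

From HB Require Import structures.
From mathcomp Require Import all_boot all_order all_algebra.
From mathcomp Require Import all_classical all_reals all_analysis.
Set Implicit Arguments. Unset Strict Implicit. Unset Printing Implicit Defensive.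
Import Order.TTheory GRing.Theory Num.Theory.
Import numFieldNormedType.Exports.
Local Open Scope classical_set_scope.
Local Open Scope ring_scope.

Section BanachLattice.
Variables (R : realType) (E : completeNormedModType R).
Variables (le : E -> E -> Prop) (join : E -> E -> E).

Definition lmeet (x y : E) : E := - join (- x) (- y).
Definition labs (x : E) : E := join x (- x).
Definition disjoint (x y : E) : Prop := lmeet (labs x) (labs y) = 0.

Definition is_banach_lattice : Prop :=
  [/\ (forall x, le x x),
      (forall x y, le x y -> le y x -> x = y),
      (forall x y z, le x y -> le y z -> le x z),
      (forall x y, le x (join x y) /\ le y (join x y)
         /\ forall z, le x z -> le y z -> le (join x y) z)
    & [/\ (forall x y z, le x y -> le (x + z) (y + z)),
           (forall (a : R) x y, 0 <= a -> le x y -> le (a *: x) (a *: y))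
         & (forall x y, le (labs x) (labs y) -> `|x| <= `|y|)]].

Definition linear_op (T : E -> E) : Prop :=
  forall (a : R) x y, T (a *: x + y) = a *: T x + T y.

Definition bounded_op (T : E -> E) : Prop :=
  linear_op T /\ exists C : R, forall x, `|T x| <= C * `|x|.

Definition order_bounded (T : E -> E) : Prop :=
  forall a b, exists c d, forall x, le a x -> le x b ->
    le c (T x) /\ le (T x) d.

Definition disjoint_preserving (T : E -> E) : Prop :=
  forall x y, disjoint x y -> disjoint (T x) (T y).

Definition weakly_cvg (u : nat -> E) (x : E) : Prop :=
  forall f : E -> R, (forall (a : R) y z, f (a *: y + z) = a * f y + f z) ->
    continuous f -> (fun n => f (u n)) @ \oo --> f x.

Definition uaw_cvg (u : nat -> E) (x : E) : Prop :=
  forall v, le 0 v -> weakly_cvg (fun n => lmeet (labs (u n - x)) v) 0.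

Definition norm_bounded_seq (u : nat -> E) : Prop :=
  exists M : R, forall n, `|u n| <= M.

Definition uaw_DP (T : E -> E) : Prop :=
  bounded_op T /\
  forall u : nat -> E, norm_bounded_seq u -> uaw_cvg u 0 ->
    (fun n => `|T (u n)|) @ \oo --> (0 : R).

Definition op_le (S S' : E -> E) : Prop :=
  forall x, le 0 x -> le (S x) (S' x).

(* S is the modulus |T| = T \/ (-T), the supremum being taken in the
   ordered vector space L_b(E) of order bounded (linear) operators *)
Definition is_modulus (S T : E -> E) : Prop :=
  [/\ linear_op S, order_bounded S,
      op_le T S, op_le (fun x => - T x) S
    & forall S', linear_op S' -> order_bounded S' ->
        op_le T S' -> op_le (fun x => - T x) S' -> op_le S S'].

End BanachLattice.

From Pilot Require Import Defs.
From HB Require Import structures.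
From mathcomp Require Import all_boot all_order all_algebra.
From mathcomp Require Import all_classical all_reals all_analysis.
Import Order.TTheory GRing.Theory Num.Theory.
Import numFieldNormedType.Exports.
Local Open Scope classical_set_scope.
Local Open Scope ring_scope.

Set Implicit Arguments.
Unset Strict Implicit.
Unset Printing Implicit Defensive.

(* For a disjoint preserving operator [T] the vectors [T (a^+)] and [T (a^-)]
   are disjoint for every [a]; comparing [n x - m (x + z)] for [m = 0, ..., n]
   then gives [n (|T x| + |T z| - |T (x + z)|) <= 2 w] for every [n], where [w]
   bounds [|T v|] for [v] in [[0, x + z]], so that [z |-> |T z|] is additive on
   the positive cone (the lattice norm makes the order Archimedean).  It therefore extends to a linear operator [S], which is
   the modulus of [T] and satisfies [|S x| <= |T |x||].  As [(|u n|)] is norm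
   bounded and uaw-null whenever [(u n)] is, [||S (u n)|| <= ||T |u n||| -> 0]. *)

Lemma scaler_half_double (F : numFieldType) (V : lmodType F) (v : V) :
  2^-1 *: (v + v) = v.
Proof. by rewrite -mulr2n -[v *+ 2]scaler_nat scalerA mulVf ?pnatr_eq0 // scale1r. Qed.

Section LinearOperators.
Variables (R : realType) (E : completeNormedModType R) (T : E -> E).
Hypothesis hT : linear_op T.

Lemma linear_op0 : T 0 = 0.
Proof.
by have := hT 1 0 0; rewrite !scale1r addr0 => e; apply: (addrI (T 0)); rewrite addr0 -e.
Qed.

Lemma linear_opD x y : T (x + y) = T x + T y.
Proof. by have := hT 1 x y; rewrite !scale1r. Qed.

Lemma linear_opZ a x : T (a *: x) = a *: T x.
Proof. by have := hT a x 0; rewrite !addr0 linear_op0 addr0. Qed.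

Lemma linear_opN x : T (- x) = - T x.
Proof. by rewrite -scaleN1r linear_opZ scaleN1r. Qed.

Lemma linear_opB x y : T (x - y) = T x - T y.
Proof. by rewrite linear_opD linear_opN. Qed.

End LinearOperators.

Section BanachLattice.
Variables (R : realType) (E : completeNormedModType R).
Variables (le : E -> E -> Prop) (join : E -> E -> E).
Hypothesis HE : is_banach_lattice le join.

Local Notation meet := (lmeet join).
Local Notation abs := (labs join).

Lemma bl_refl x : le x x.
Proof. by case: HE => h *; apply: h. Qed.

Lemma bl_anti x y : le x y -> le y x -> x = y.
Proof. by case: HE => _ h *; apply: h. Qed.

Lemma bl_trans x y z : le x y -> le y z -> le x z.
Proof. by case: HE => _ _ h _ _; apply: h. Qed.

Lemma bl_joinl x y : le x (join x y).
Proof. by case: HE => _ _ _ h _; case: (h x y). Qed.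

Lemma bl_joinr x y : le y (join x y).
Proof. by case: HE => _ _ _ h _; case: (h x y) => _ []. Qed.

Lemma bl_join_lub x y z : le x z -> le y z -> le (join x y) z.
Proof. by case: HE => _ _ _ h _; case: (h x y) => _ [] _; apply. Qed.

Lemma bl_leDr x y z : le x y -> le (x + z) (y + z).
Proof. by case: HE => _ _ _ _ [] h _ _; apply: h. Qed.

Lemma bl_leZ (a : R) x y : 0 <= a -> le x y -> le (a *: x) (a *: y).
Proof. by case: HE => _ _ _ _ [] _ h _; apply: h. Qed.

Lemma bl_norm_le x y : le (abs x) (abs y) -> `|x| <= `|y|.
Proof. by case: HE => _ _ _ _ [] _ _ h; apply: h. Qed.

Lemma bl_eq_le x y : x = y -> le x y.
Proof. by move->; apply: bl_refl. Qed.

Lemma bl_leDl x y z : le x y -> le (z + x) (z + y).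
Proof. by rewrite ![z + _]addrC; apply: bl_leDr. Qed.

Lemma bl_leD a b c d : le a b -> le c d -> le (a + c) (b + d).
Proof. by move=> hab hcd; apply: bl_trans (bl_leDr c hab) (bl_leDl b hcd). Qed.

Lemma bl_leN x y : le x y -> le (- y) (- x).
Proof.
move=> /(bl_leDr (- x - y)).
by rewrite addrA subrr add0r addrCA subrr addr0.
Qed.

Lemma bl_subr_ge0 x y : le 0 (y - x) <-> le x y.
Proof.
split=> [/(bl_leDr x)|/(bl_leDr (- x))]; first by rewrite add0r subrK.
by rewrite subrr.
Qed.

Lemma bl_oppr_le0 x : le 0 x -> le (- x) 0.
Proof. by move=> /bl_leN; rewrite oppr0. Qed.

Lemma bl_addr_ge0 x y : le 0 x -> le 0 y -> le 0 (x + y).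
Proof. by move=> hx hy; have := bl_leD hx hy; rewrite addr0. Qed.

Lemma bl_scaler_ge0 (a : R) x : 0 <= a -> le 0 x -> le 0 (a *: x).
Proof. by move=> ha hx; have := bl_leZ ha hx; rewrite scaler0. Qed.

Lemma bl_joinC x y : join x y = join y x.
Proof. by apply: bl_anti; apply: bl_join_lub; (apply: bl_joinl || apply: bl_joinr). Qed.

Lemma bl_join_idPl x y : le y x -> join x y = x.
Proof.
by move=> hyx; apply: bl_anti (bl_joinl _ _); apply: bl_join_lub hyx; apply: bl_refl.
Qed.

Lemma bl_join_le a b c d : le a b -> le c d -> le (join a c) (join b d).
Proof.
move=> hab hcd.
by apply: bl_join_lub; [apply: bl_trans hab (bl_joinl _ _) | apply: bl_trans hcd (bl_joinr _ _)].
Qed.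

Lemma bl_joinDr x y z : join x y + z = join (x + z) (y + z).
Proof.
apply: bl_anti; last by apply: bl_join_lub; apply: bl_leDr; [apply: bl_joinl | apply: bl_joinr].
suff h : le (join x y) (join (x + z) (y + z) - z) by have := bl_leDr z h; rewrite subrK.
by apply: bl_join_lub; [have := bl_leDr (- z) (bl_joinl (x + z) (y + z))
  | have := bl_leDr (- z) (bl_joinr (x + z) (y + z))]; rewrite addrK.
Qed.

Lemma bl_joinZ (a : R) x y : 0 <= a -> a *: join x y = join (a *: x) (a *: y).
Proof.
rewrite le0r => /orP [/eqP -> | ha].
  by rewrite !scale0r bl_join_idPl //; apply: bl_refl.
have haV : 0 <= a^-1 by rewrite invr_ge0 ltW.
have scaleVK u : a^-1 *: (a *: u) = u by rewrite scalerA mulVf ?gt_eqF // scale1r.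
apply: bl_anti; last first.
  by apply: bl_join_lub; apply: bl_leZ (ltW ha) _; [apply: bl_joinl | apply: bl_joinr].
suff h : le (join x y) (a^-1 *: join (a *: x) (a *: y)).
  by have := bl_leZ (ltW ha) h; rewrite scalerA divff ?gt_eqF // scale1r.
by apply: bl_join_lub; rewrite -[X in le X _]scaleVK; apply: bl_leZ haV _;
  [apply: bl_joinl | apply: bl_joinr].
Qed.

Lemma bl_meetl x y : le (meet x y) x.
Proof. by rewrite /lmeet -{2}[x]opprK; apply/bl_leN/bl_joinl. Qed.

Lemma bl_meetr x y : le (meet x y) y.
Proof. by rewrite /lmeet -{2}[y]opprK; apply/bl_leN/bl_joinr. Qed.

Lemma bl_meet_glb x y z : le z x -> le z y -> le z (meet x y).
Proof.
by move=> hzx hzy; rewrite /lmeet -[z]opprK; apply/bl_leN/bl_join_lub; apply: bl_leN.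
Qed.

Lemma bl_meetDr x y z : meet x y + z = meet (x + z) (y + z).
Proof. by rewrite /lmeet -[z]opprK -opprD bl_joinDr !opprK -!opprD. Qed.

Lemma bl_meet_le a b c d : le a b -> le c d -> le (meet a c) (meet b d).
Proof.
move=> hab hcd.
by apply: bl_meet_glb; [apply: bl_trans (bl_meetl _ _) hab | apply: bl_trans (bl_meetr _ _) hcd].
Qed.

(* [join x y - x - y = join (- y) (- x) = - meet x y] *)
Lemma bl_addr_join_meet x y : x + y = join x y + meet x y.
Proof.
have := bl_joinDr x y (- x - y).
have -> : x + (- x - y) = - y by rewrite addrA subrr add0r.
have -> : y + (- x - y) = - x by rewrite addrC -addrA [- y + y]addrC subrr addr0.
rewrite [join (- y) _]bl_joinC => e.
by rewrite /lmeet -e !opprD !opprK addrA subrr add0r.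
Qed.

Lemma bl_abs_ge x : le x (abs x).
Proof. exact: bl_joinl. Qed.

Lemma bl_abs_geN x : le (- x) (abs x).
Proof. exact: bl_joinr. Qed.

Lemma bl_abs_lub x z : le x z -> le (- x) z -> le (abs x) z.
Proof. exact: bl_join_lub. Qed.

Lemma bl_abs_ge0 x : le 0 (abs x).
Proof.
have := bl_leZ (_ : 0 <= 2^-1 :> R) (bl_leD (bl_abs_ge x) (bl_abs_geN x)).
by rewrite subrr scaler0 scaler_half_double; apply; rewrite invr_ge0 ler0n.
Qed.

Lemma bl_absN x : abs (- x) = abs x.
Proof. by rewrite /labs opprK bl_joinC. Qed.

Lemma bl_abs_id x : le 0 x -> abs x = x.
Proof. by move=> hx; apply: bl_join_idPl; apply: bl_trans (bl_oppr_le0 hx) hx. Qed.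

Lemma bl_abs_abs x : abs (abs x) = abs x.
Proof. exact: bl_abs_id (bl_abs_ge0 x). Qed.

Lemma bl_absZ (a : R) x : 0 <= a -> abs (a *: x) = a *: abs x.
Proof. by move=> ha; rewrite /labs bl_joinZ // scalerN. Qed.

Lemma bl_abs_triangle x y : le (abs (x + y)) (abs x + abs y).
Proof.
apply: bl_abs_lub; first exact: bl_leD (bl_abs_ge _) (bl_abs_ge _).
by rewrite opprD; apply: bl_leD (bl_abs_geN _) (bl_abs_geN _).
Qed.

Lemma bl_norm_abs x : `|abs x| = `|x|.
Proof. by apply/eqP; rewrite eq_le !bl_norm_le // bl_abs_abs; apply: bl_refl. Qed.

Lemma bl_archimedean x y : le 0 x -> (forall n : nat, le (n%:R *: x) y) -> x = 0.
Proof.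
move=> hx hnxy.
have hy : le 0 y by have := hnxy 0%N; rewrite scale0r.
have hn n : n%:R * `|x| <= `|y|.
  have hnx := bl_scaler_ge0 (ler0n R n) hx.
  have := bl_norm_le (x := n%:R *: x) (y := y).
  by rewrite (bl_abs_id hnx) (bl_abs_id hy) normrZ ger0_norm ?ler0n //; apply.
apply/eqP; rewrite -normr_eq0; apply/negPn/negP => hx0.
have hxpos : 0 < `|x| by rewrite lt_def hx0 normr_ge0.
have hb := archi_boundP (divr_ge0 (normr_ge0 y) (normr_ge0 x)).
have := hn (Num.Def.archi_bound (`|y| / `|x|)).
by rewrite -ler_pdivlMr // => /(lt_le_trans hb); rewrite ltxx.
Qed.

Definition lpos x := join x 0.
Definition lneg x := join (- x) 0.

Lemma lpos_ge0 x : le 0 (lpos x). Proof. exact: bl_joinr. Qed.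
Lemma lneg_ge0 x : le 0 (lneg x). Proof. exact: bl_joinr. Qed.

Lemma lposE x : lpos x = x + lneg x.
Proof. by rewrite addrC /lneg bl_joinDr addNr add0r bl_joinC. Qed.

Lemma lpos_sub_lneg x : lpos x - lneg x = x.
Proof. by rewrite lposE addrK. Qed.

Lemma lpos_id x : le 0 x -> lpos x = x.
Proof. exact: bl_join_idPl. Qed.

Lemma lneg_id0 x : le 0 x -> lneg x = 0.
Proof. by move=> hx; rewrite /lneg bl_joinC bl_join_idPl //; apply: bl_oppr_le0. Qed.

Lemma lpos_id0 x : le x 0 -> lpos x = 0.
Proof. by move=> hx; rewrite /lpos bl_joinC bl_join_idPl. Qed.

Lemma meet_lpos_lneg x : meet (lpos x) (lneg x) = 0.
Proof.
have := bl_meetDr x 0 (lneg x); rewrite add0r -lposE => <-.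
by rewrite /lmeet oppr0 addNr.
Qed.

Lemma disjoint_lpos_lneg x : Defs.disjoint join (lpos x) (lneg x).
Proof.
by rewrite /Defs.disjoint (bl_abs_id (lpos_ge0 x)) (bl_abs_id (lneg_ge0 x)) meet_lpos_lneg.
Qed.

Lemma labs_lpos_lneg x : abs x = lpos x + lneg x.
Proof.
rewrite bl_addr_join_meet meet_lpos_lneg addr0; apply: bl_anti.
  apply: bl_abs_lub; [apply: bl_trans (bl_joinl x 0) (bl_joinl _ _)
                    | apply: bl_trans (bl_joinl (- x) 0) (bl_joinr _ _)].
by apply: bl_join_lub; apply: bl_join_lub;
  [exact: bl_abs_ge | exact: bl_abs_ge0 | exact: bl_abs_geN | exact: bl_abs_ge0].
Qed.

Lemma lpos_sub_lpos_subr x y : le 0 y ->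
  le 0 (lpos x - lpos (x - y)) /\ le (lpos x - lpos (x - y)) y.
Proof.
move=> hy; split.
  apply/bl_subr_ge0; apply: bl_join_le (bl_refl _).
  by have := bl_leDl (x - y) hy; rewrite addr0 subrK.
suff h : le (lpos x) (lpos (x - y) + y).
  by have := bl_leDr (- lpos (x - y)) h; rewrite addrAC subrr add0r.
by rewrite /lpos bl_joinDr subrK add0r; apply: bl_join_le (bl_refl _) hy.
Qed.

Lemma le_meet_double z u v : le z (u + u) -> le z (v + v) -> le z (meet u v + meet u v).
Proof.
have le_half w : le z (w + w) -> le (2^-1 *: z) w.
  by move=> hw; rewrite -[w]scaler_half_double; apply: bl_leZ hw; rewrite invr_ge0.
move=> hu hv; rewrite -[z]scaler_half_double scalerDr.
by apply: bl_leD; apply: bl_meet_glb; apply: le_half.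
Qed.

(* [(p + w) /\ (p + q) = p + w /\ q = p \/ (w /\ q)], since [p /\ q = 0]. *)
Lemma meet_join_le_disjoint w v h p q :
  le 0 w -> le 0 p -> le 0 q -> meet p q = 0 ->
  le v (p + w) -> le h (p + q) -> le (meet (join w v) h) (join w p).
Proof.
move=> hw hp hq hpq hv hh.
have hwv : le (join w v) (p + w).
  by apply: bl_join_lub hv; have := bl_leDr w hp; rewrite add0r.
apply: bl_trans (bl_meet_le hwv hh) _.
rewrite [p + w]addrC [p + q]addrC -bl_meetDr addrC bl_addr_join_meet.
have -> : meet p (meet w q) = 0.
  apply: bl_anti; first by rewrite -hpq; apply: bl_meet_le (bl_refl p) (bl_meetr w q).
  exact: bl_meet_glb hp (bl_meet_glb hw hq).
rewrite addr0; apply: bl_join_lub; first exact: bl_joinr.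
exact: bl_trans (bl_meetl w q) (bl_joinl w p).
Qed.

Lemma labs_add_labs_sub_le X B (m n : nat) : (m <= n)%N ->
  le (abs X + abs (n%:R *: B - X) - n%:R *: abs B)
     (abs (X - m%:R *: B) + abs (X - m%:R *: B)).
Proof.
move=> hmn; set h := X - m%:R *: B.
have eX : X = m%:R *: B + h by rewrite /h addrC subrK.
have eY : n%:R *: B - X = (n - m)%:R *: B - h.
  by rewrite /h natrB // scalerBl opprB addrA subrK.
have hX : le (abs X) (m%:R *: abs B + abs h).
  by rewrite {1}eX -bl_absZ ?ler0n //; apply: bl_abs_triangle.
have hY : le (abs (n%:R *: B - X)) ((n - m)%:R *: abs B + abs h).
  by rewrite eY -bl_absZ ?ler0n // -(bl_absN h); apply: bl_abs_triangle.
apply: bl_trans (bl_leDr _ (bl_leD hX hY)) _; apply: bl_eq_le.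
by rewrite addrACA -scalerDl -natrD subnKC // addrAC subrr add0r.
Qed.

Lemma disjoint_chain_bound (D w : E) (p q : nat -> E) (n : nat) :
  le 0 w -> q 0%N = 0 -> (forall m, meet (abs (p m)) (abs (q m)) = 0) ->
  (forall m, le (abs (p m)) (abs (p m.+1) + w)) ->
  (forall m, (m <= n)%N -> le D (abs (p m - q m) + abs (p m - q m))) ->
  le D (join w (abs (p n)) + join w (abs (p n))).
Proof.
move=> hw hq0 hpq hp hD; suff: forall k, (k <= n)%N ->
    le D (join w (abs (p k)) + join w (abs (p k))) by apply.
elim=> [|k IH] hk.
  by apply: bl_trans (hD 0%N hk) _; rewrite hq0 subr0; apply: bl_leD; apply: bl_joinr.
apply: bl_trans (le_meet_double (IH (ltnW hk)) (hD k.+1 hk)) _.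
have hm : le (meet (join w (abs (p k))) (abs (p k.+1 - q k.+1))) (join w (abs (p k.+1))).
  apply: (meet_join_le_disjoint (q := abs (q k.+1))) => //; try exact: bl_abs_ge0.
  by apply: bl_trans (bl_abs_triangle _ _) _; rewrite bl_absN; apply: bl_refl.
exact: (bl_leD hm hm).
Qed.

Section DisjointPreserving.
Variable T : E -> E.
Hypotheses (hT : linear_op T) (hob : order_bounded le T).
Hypothesis hdp : disjoint_preserving join T.

Lemma order_bounded_labs y :
  exists2 w, le 0 w & forall z, le 0 z -> le z y -> le (abs (T z)) w.
Proof.
have [c [d hcd]] := hob 0 y.
exists (abs c + abs d); first exact: bl_addr_ge0 (bl_abs_ge0 c) (bl_abs_ge0 d).
move=> z hz0 hzy; have [hcz hzd] := hcd z hz0 hzy.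
apply: bl_abs_lub.
  apply: bl_trans hzd (bl_trans (bl_abs_ge d) _).
  by have := bl_leDr (abs d) (bl_abs_ge0 c); rewrite add0r.
apply: bl_trans (bl_leN hcz) (bl_trans (bl_abs_geN c) _).
by have := bl_leDl (abs c) (bl_abs_ge0 d); rewrite addr0.
Qed.

Lemma labs_op_lpos_le x y w : le 0 y ->
  (forall z, le 0 z -> le z y -> le (abs (T z)) w) ->
  le (abs (T (lpos x))) (abs (T (lpos (x - y))) + w).
Proof.
move=> hy hw; have [hd0 hdy] := lpos_sub_lpos_subr x hy.
rewrite -[lpos x](subrK (lpos (x - y))) (linear_opD hT).
apply: bl_trans (bl_abs_triangle _ _) _; rewrite addrC; apply: bl_leDl.
exact: hw.
Qed.

(* Apply [disjoint_chain_bound] to [p m := T (lpos (a m))], [q m := T (lneg (a m))]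
   with [a m := n x - m (x + z)]: then [p m - q m = n T x - m T (x + z)],
   [q 0 = 0] and [p n = 0]. *)
Lemma labs_op_add_defect x z w : le 0 x -> le 0 z -> le 0 w ->
  (forall v, le 0 v -> le v (x + z) -> le (abs (T v)) w) ->
  forall n : nat, le (n%:R *: (abs (T x) + abs (T z) - abs (T (x + z)))) (w + w).
Proof.
move=> hx hz hw0 hw n; set y := x + z; set N : R := n%:R.
have hy : le 0 y := bl_addr_ge0 hx hz.
pose a m := N *: x - m%:R *: y.
pose p m := T (lpos (a m)); pose q m := T (lneg (a m)).
have hq0 : q 0%N = 0.
  rewrite /q /a scale0r subr0 lneg_id0 ?(linear_op0 hT) //.
  exact: bl_scaler_ge0 (ler0n _ _) hx.
have hpn : p n = 0.
  rewrite /p /a lpos_id0 ?(linear_op0 hT) // -scalerBr /y opprD addrA subrr add0r.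
  by rewrite scalerN; apply/bl_oppr_le0/bl_scaler_ge0; rewrite ?ler0n.
have hp m : le (abs (p m)) (abs (p m.+1) + w).
  rewrite /p (_ : a m.+1 = a m - y); first exact: labs_op_lpos_le.
  by rewrite /a -addn1 natrD scalerDl scale1r opprD addrA.
have hD m : (m <= n)%N -> le (abs (N *: T x) + abs (N *: T y - N *: T x) - N *: abs (T y))
    (abs (p m - q m) + abs (p m - q m)).
  move=> hm; have -> : p m - q m = N *: T x - m%:R *: T y.
    by rewrite -(linear_opB hT) lpos_sub_lneg (linear_opB hT) !(linear_opZ hT).
  exact: labs_add_labs_sub_le.
have hpq m : meet (abs (p m)) (abs (q m)) = 0 := hdp (disjoint_lpos_lneg (a m)).
have := disjoint_chain_bound hw0 hq0 hpq hp hD.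
have eyx : y - x = z by rewrite /y addrC addKr.
rewrite hpn (bl_abs_id (bl_refl 0)) (bl_join_idPl hw0) -scalerBr -(linear_opB hT) eyx.
by rewrite !bl_absZ ?ler0n // -scalerDr -scalerBr.
Qed.

Lemma labs_op_additive x z : le 0 x -> le 0 z ->
  abs (T (x + z)) = abs (T x) + abs (T z).
Proof.
move=> hx hz; have [w hw0 hw] := order_bounded_labs (x + z).
have hr : le 0 (abs (T x) + abs (T z) - abs (T (x + z))).
  by apply/bl_subr_ge0; rewrite (linear_opD hT); apply: bl_abs_triangle.
have := bl_archimedean hr (labs_op_add_defect hx hz hw0 hw).
by move/eqP; rewrite subr_eq0 => /eqP ->.
Qed.

Definition modulus_op x := abs (T (lpos x)) - abs (T (lneg x)).

Lemma modulus_op_ge0 x : le 0 x -> modulus_op x = abs (T x).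
Proof.
move=> hx; rewrite /modulus_op lpos_id // lneg_id0 // (linear_op0 hT).
by rewrite (bl_abs_id (bl_refl 0)) subr0.
Qed.

Lemma modulus_op_subr p q : le 0 p -> le 0 q ->
  modulus_op (p - q) = abs (T p) - abs (T q).
Proof.
move=> hp hq; set x := p - q.
have e : lpos x + q = p + lneg x by rewrite lposE /x addrAC subrK.
have e2 : abs (T (lpos x)) + abs (T q) = abs (T p) + abs (T (lneg x)).
  by rewrite -(labs_op_additive (lpos_ge0 x) hq) -(labs_op_additive hp (lneg_ge0 x)) e.
by rewrite /modulus_op -(addrK (abs (T q)) (abs (T (lpos x)))) e2 addrAC addrK.
Qed.

Lemma modulus_opN x : modulus_op (- x) = - modulus_op x.
Proof. by rewrite /modulus_op opprB /lpos /lneg opprK. Qed.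

Lemma modulus_op_linear_ge0 (a : R) x y : 0 <= a ->
  modulus_op (a *: x + y) = a *: modulus_op x + modulus_op y.
Proof.
move=> ha.
have e : a *: x + y = (a *: lpos x + lpos y) - (a *: lneg x + lneg y).
  by rewrite -{1}(lpos_sub_lneg x) -{1}(lpos_sub_lneg y) scalerBr opprD addrACA.
have hpx := bl_scaler_ge0 ha (lpos_ge0 x); have hnx := bl_scaler_ge0 ha (lneg_ge0 x).
have hpy := lpos_ge0 y; have hny := lneg_ge0 y.
rewrite e modulus_op_subr; try exact: bl_addr_ge0.
rewrite !labs_op_additive //.
by rewrite !(linear_opZ hT) !bl_absZ // scalerBr opprD addrACA.
Qed.

Lemma modulus_op_linear : linear_op modulus_op.
Proof.
move=> a x y; have [ha|ha] := leP 0 a; first exact: modulus_op_linear_ge0.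
have -> : a *: x = - a *: - x by rewrite scaleNr scalerN opprK.
rewrite modulus_op_linear_ge0; last by rewrite oppr_ge0 ltW.
by rewrite modulus_opN scaleNr scalerN opprK.
Qed.

Lemma modulus_op_le x y : le x y -> le (modulus_op x) (modulus_op y).
Proof.
move=> /bl_subr_ge0 hxy; apply/bl_subr_ge0.
by rewrite -(linear_opB modulus_op_linear) modulus_op_ge0 //; apply: bl_abs_ge0.
Qed.

Lemma modulus_op_order_bounded : order_bounded le modulus_op.
Proof.
move=> a b; exists (modulus_op a), (modulus_op b) => x hax hxb.
by split; apply: modulus_op_le.
Qed.

Lemma modulus_op_is_modulus : is_modulus le modulus_op T.
Proof.
split.
- exact: modulus_op_linear.
- exact: modulus_op_order_bounded.
- by move=> x hx; rewrite modulus_op_ge0 //; apply: bl_abs_ge.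
- by move=> x hx; rewrite modulus_op_ge0 //; apply: bl_abs_geN.
- move=> S _ _ hTS hNTS x hx; rewrite modulus_op_ge0 //.
  by apply: bl_abs_lub; [exact: hTS | exact: hNTS].
Qed.

Lemma labs_modulus_op_le x : le (abs (modulus_op x)) (abs (T (abs x))).
Proof.
rewrite (labs_lpos_lneg x) (labs_op_additive (lpos_ge0 x) (lneg_ge0 x)).
apply: bl_trans (bl_abs_triangle _ _) _.
by rewrite bl_absN !bl_abs_abs; apply: bl_refl.
Qed.

Lemma modulus_op_uaw_DP : uaw_DP le join T -> uaw_DP le join modulus_op.
Proof.
move=> [[_ [C hC]] hTuaw]; split.
  split; first exact: modulus_op_linear.
  exists C => x; apply: le_trans (bl_norm_le (labs_modulus_op_le x)) _.
  by rewrite -(bl_norm_abs x); apply: hC.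
move=> u [M hM] hu.
have hTabs : (fun n => `|T (abs (u n))|) @ \oo --> (0 : R).
  apply: hTuaw; first by exists M => n; rewrite bl_norm_abs.
  move=> v hv; rewrite (_ : (fun n => _) = fun n => meet (abs (u n - 0)) v); first exact: hu.
  by apply: funext => n; rewrite !subr0 bl_abs_abs.
apply: (squeeze_cvgr _ (cvg_cst 0) hTabs).
near=> n; rewrite normr_ge0 /=.
exact: bl_norm_le (labs_modulus_op_le (u n)).
Unshelve. all: by end_near.
Qed.

End DisjointPreserving.

End BanachLattice.

Theorem theorem2p37 (R : realType) (E : completeNormedModType R)
  (le : E -> E -> Prop) (join : E -> E -> E)
  (HE : is_banach_lattice le join) (T : E -> E) :
  bounded_op T -> order_bounded le T -> disjoint_preserving join T ->
  uaw_DP le join T ->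
  exists S : E -> E, is_modulus le S T /\ uaw_DP le join S.
Proof.
move=> [hT _] hob hdp huaw; exists (modulus_op join T); split.
- exact: (modulus_op_is_modulus HE hT hob hdp).
- exact: (modulus_op_uaw_DP HE hT hob hdp huaw).
Qed.
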